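(* Let $\Gamma$ be a graph. Then $\Gamma$ is strongly shortcut as a graph if and only if $\Gamma$ does not approximate $n$-gons.
   Context: Graphs are geodesic metric spaces with each edge isometric to the unit interval. The cycle graph $S_n$ is the graph isometric to a Riemannian circle of length $n$; a cycle in $\Gamma$ is a combinatorial map $\alpha\colon S_n\to\Gamma$; for $K>1$ it is $\frac1K$-almost isometric if $d(\alpha(p),\alpha(\bar p))\ge\frac1K\cdot\frac n2$ for all antipodal $p,\bar p\in S_n$. $\Gamma$ is strongly shortcut as a graph if for some $K>1$ there is a bound on the lengths of its $\frac1K$-almost isometric cycles. $S_n^0$ is the vertex set of $S_n$ with the induced metric and $\lambda S_n^0$ is it with the metric scaled by $\lambda>0$. A metric space $X$ approximates $n$-gons if for every $K>1$ and every $n\in\mathbb N$ there exist $K$-bilipschitz embeddings $\lambda S_n^0\to X$ for arbitrarily large $\lambda>0$. *)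

From Stdlib Require Import Reals Lra ClassicalEpsilon.
Open Scope R_scope.

Record graph := {
  gV : Type;
  gE : Type;
  gsrc : gE -> gV;
  gtgt : gE -> gV }.

Inductive walk (G : graph) : gV G -> gV G -> nat -> Prop :=
| walk0 v : walk G v v 0
| walk_fw e v n : walk G (gtgt G e) v n -> walk G (gsrc G e) v (S n)
| walk_bw e v n : walk G (gsrc G e) v n -> walk G (gtgt G e) v (S n).

Definition connected_graph (G : graph) : Prop :=
  forall u v : gV G, exists n, walk G u v n.

Definition is_vdist (G : graph) (u v : gV G) (n : nat) : Prop :=
  walk G u v n /\ forall m, walk G u v m -> (n <= m)%nat.

(* combinatorial distance between vertices (meaningful for connected G) *)
Definition vdist (G : graph) (u v : gV G) : R :=
  INR (epsilon (inhabits 0%nat) (is_vdist G u v)).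

(* points of the geometric realization: a vertex, or the point of edge e at
   distance t from (gsrc e), 0 <= t <= 1 *)
Inductive gpoint (G : graph) : Type :=
| Vtx (v : gV G)
| Ept (e : gE G) (t : R).
Arguments Vtx {G} v.
Arguments Ept {G} e t.

Definition valid_point {G : graph} (p : gpoint G) : Prop :=
  match p with Vtx _ => True | Ept _ t => 0 <= t <= 1 end.

(* length of the shortest route leaving through endpoints *)
Definition via_ends {G : graph} (x y : gpoint G) : R :=
  let d := vdist G in
  let s_ := gsrc G in let t_ := gtgt G in
  match x, y with
  | Vtx u, Vtx v => d u v
  | Vtx u, Ept e t => Rmin (d u (s_ e) + t) (d u (t_ e) + (1 - t))
  | Ept e s, Vtx v => Rmin (s + d (s_ e) v) ((1 - s) + d (t_ e) v)
  | Ept e s, Ept e' t =>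
      Rmin (Rmin (s + d (s_ e) (s_ e') + t) (s + d (s_ e) (t_ e') + (1 - t)))
           (Rmin ((1 - s) + d (t_ e) (s_ e') + t)
                 ((1 - s) + d (t_ e) (t_ e') + (1 - t)))
  end.

(* the path metric of the geometric realization (edges of length 1) *)
Definition gdist {G : graph} (x y : gpoint G) : R :=
  match x, y with
  | Ept e s, Ept e' t =>
      if excluded_middle_informative (e = e')
      then Rmin (Rabs (s - t)) (via_ends x y) else via_ends x y
  | _, _ => via_ends x y
  end.

(* A combinatorial map alpha : S_n -> G (n >= 1): vertex i of S_n goes to f i,
   the edge [i, i+1 mod n] goes onto edge (fst (h i)), traversed from gsrc to
   gtgt if snd (h i) = true, and backwards otherwise. *)
Definition is_comb_cycle (G : graph) (n : nat) (f : nat -> gV G)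
  (h : nat -> gE G * bool) : Prop :=
  (0 < n)%nat /\
  forall i, (i < n)%nat ->
    let j := Nat.modulo (i + 1) n in
    match h i with
    | (e, true) => gsrc G e = f i /\ gtgt G e = f j
    | (e, false) => gtgt G e = f i /\ gsrc G e = f j
    end.

(* image under alpha of the point x of S_n = R / nZ *)
Definition cycle_pt (G : graph) (n : nat) (h : nat -> gE G * bool) (x : R)
  : gpoint G :=
  let i := Z.to_nat (Z.modulo (Int_part x) (Z.of_nat n)) in
  let s := x - IZR (Int_part x) in
  match h i with
  | (e, true) => Ept e s
  | (e, false) => Ept e (1 - s)
  end.

Definition almost_isometric_cycle (G : graph) (K : R) (n : nat)
  (h : nat -> gE G * bool) : Prop :=
  forall x : R,
    gdist (cycle_pt G n h x) (cycle_pt G n h (x + INR n / 2)) >= (1 / K) * (INR n / 2).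

Definition strongly_shortcut_graph (G : graph) : Prop :=
  exists K : R, 1 < K /\ exists N : nat,
    forall (n : nat) (f : nat -> gV G) (h : nat -> gE G * bool),
      is_comb_cycle G n f h -> almost_isometric_cycle G K n h -> (n <= N)%nat.

Definition cyc_dist (n i j : nat) : R :=
  let d := INR (Nat.max i j - Nat.min i j) in Rmin d (INR n - d).

Definition bilip_ngon (G : graph) (K lam : R) (n : nat) (g : nat -> gpoint G)
  : Prop :=
  (forall i, (i < n)%nat -> valid_point (g i)) /\
  forall i j, (i < n)%nat -> (j < n)%nat ->
    (1 / K) * (lam * cyc_dist n i j) <= gdist (g i) (g j) /\
    gdist (g i) (g j) <= K * (lam * cyc_dist n i j).

Definition approximates_ngons (G : graph) : Prop :=
  forall K : R, 1 < K -> forall n : nat, forall L : R,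
    exists lam : R, 0 < lam /\ L < lam /\
      exists g : nat -> gpoint G, bilip_ngon G K lam n g.

(* If the graph approximates n-gons, take a K-bilipschitz copy of [lam S_m^0]
   with [K] close to 1 and [m], [lam] large, move its points to nearby vertices
   and join consecutive ones by geodesics.  The resulting combinatorial cycle
   has length about [m lam / K], and antipodal points on it stay near n-gon
   vertices about [m/2] apart, so it is [1/q]-almost isometric once [K] is
   close enough to 1 in terms of [q]; as [lam] grows, this contradicts strong
   shortcutness.  Conversely, a [1/K']-almost isometric cycle of length [n]
   distorts distances by at most [(1 - 1/K') n/2], so for [K'] close to 1 its
   [m] equally spaced points form a K-bilipschitz copy of [(n/m) S_m^0]. *)

From Stdlib Require Import Reals Lra Lia ClassicalEpsilon Classical List ZArith.
Open Scope R_scope.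

Definition cyc_index (n : nat) (z : Z) : nat := Z.to_nat (z mod Z.of_nat n).

Lemma cyc_index_lt n z : (0 < n)%nat -> (cyc_index n z < n)%nat.
Proof.
  intros Hn. unfold cyc_index.
  assert (0 <= z mod Z.of_nat n < Z.of_nat n)%Z by (apply Z.mod_pos_bound; lia). lia.
Qed.

Lemma cyc_index_succ n z :
  (0 < n)%nat -> Nat.modulo (cyc_index n z + 1) n = cyc_index n (z + 1).
Proof.
  intros Hn. unfold cyc_index.
  assert (0 <= z mod Z.of_nat n < Z.of_nat n)%Z by (apply Z.mod_pos_bound; lia).
  apply Nat2Z.inj. rewrite Nat2Z.inj_mod, Nat2Z.inj_add, Z2Nat.id by lia.
  rewrite Z2Nat.id by (apply Z.mod_pos_bound; lia).
  rewrite Zplus_mod_idemp_l. reflexivity.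
Qed.

Lemma cyc_index_add_mul n z k : cyc_index n (z + k * Z.of_nat n) = cyc_index n z.
Proof. unfold cyc_index. rewrite Z_mod_plus_full. reflexivity. Qed.

Lemma cyc_index_of_nat n p : (0 < n)%nat -> cyc_index n (Z.of_nat p) = Nat.modulo p n.
Proof.
  intros Hn. unfold cyc_index. apply Nat2Z.inj.
  rewrite Z2Nat.id by (apply Z.mod_pos_bound; lia). rewrite Nat2Z.inj_mod. reflexivity.
Qed.

Lemma Int_part_add_IZR x k : Int_part (x + IZR k) = (Int_part x + k)%Z.
Proof.
  symmetry. apply Int_part_spec. rewrite plus_IZR.
  pose proof (base_Int_part x). lra.
Qed.

Lemma Int_part_IZR k : Int_part (IZR k) = k.
Proof. symmetry. apply Int_part_spec. lra. Qed.

Lemma frac_part_bounds x : 0 <= x - IZR (Int_part x) < 1.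
Proof. pose proof (base_Int_part x). lra. Qed.

(* The distance on the circle [R / L Z] between points with [|x - y| <= L]. *)
Definition circ_dist (L x y : R) : R := Rmin (Rabs (x - y)) (L - Rabs (x - y)).

Lemma circ_dist_sym L x y : circ_dist L x y = circ_dist L y x.
Proof. unfold circ_dist. rewrite Rabs_minus_sym. reflexivity. Qed.

Lemma circ_dist_le L x y : x <= y -> circ_dist L x y = Rmin (y - x) (L - (y - x)).
Proof.
  intros Hxy. unfold circ_dist. rewrite Rabs_minus_sym, Rabs_right by lra. reflexivity.
Qed.

Lemma circ_dist_scale lam L x y :
  0 <= lam -> circ_dist (lam * L) (lam * x) (lam * y) = lam * circ_dist L x y.
Proof.
  intros Hlam. unfold circ_dist.
  replace (lam * x - lam * y) with (lam * (x - y)) by ring.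
  rewrite Rabs_mult, (Rabs_right lam) by lra.
  unfold Rmin. destruct (Rle_dec _ _), (Rle_dec _ _); nra.
Qed.

Lemma cyc_dist_circ n i j : cyc_dist n i j = circ_dist (INR n) (INR i) (INR j).
Proof.
  unfold cyc_dist, circ_dist. f_equal; f_equal.
  all: destruct (Nat.le_ge_cases i j) as [H|H];
    [rewrite Nat.max_r, Nat.min_l, Rabs_minus_sym by exact H
    |rewrite Nat.max_l, Nat.min_r by exact H];
    rewrite minus_INR by exact H; apply le_INR in H; rewrite Rabs_right; lra.
Qed.

Lemma cyc_dist_succ m i :
  (1 < m)%nat -> (i < m)%nat -> cyc_dist m i (Nat.modulo (S i) m) = 1.
Proof.
  intros Hm Hi. rewrite cyc_dist_circ.
  assert (HmR : 2 <= INR m) by (apply (le_INR 2); lia).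
  destruct (Nat.eq_dec (S i) m) as [E|E].
  - rewrite E, Nat.Div0.mod_same. rewrite <- E, S_INR in *. simpl INR.
    rewrite circ_dist_sym, circ_dist_le by (pose proof (pos_INR i); lra).
    rewrite Rmin_right; lra.
  - rewrite Nat.mod_small by lia. rewrite circ_dist_le by (rewrite S_INR; lra).
    rewrite S_INR, Rmin_left; lra.
Qed.

Lemma Rabs_sub_half_circ t L : 0 <= t <= L -> Rabs (t - L / 2) = L / 2 - Rmin t (L - t).
Proof.
  intros Ht. unfold Rmin; destruct (Rle_dec t (L - t)).
  - rewrite Rabs_left1; lra.
  - rewrite Rabs_right; lra.
Qed.

Lemma reduce_mod_period L x : 0 < L -> exists k : Z, 0 <= x - IZR k * L < L.
Proof.
  intros HL. exists (Int_part (x / L)).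
  destruct (base_Int_part (x / L)) as [Hlo Hhi].
  replace (x - IZR (Int_part (x / L)) * L) with ((x / L - IZR (Int_part (x / L))) * L)
    by (field; lra).
  split; nra.
Qed.

Lemma cyc_dist_bounds m i j : (i < m)%nat -> (j < m)%nat ->
  (i = j /\ cyc_dist m i j = 0) \/ (i <> j /\ 1 <= cyc_dist m i j).
Proof.
  intros Hi Hj. rewrite cyc_dist_circ.
  assert (HmR : INR (S i) <= INR m /\ INR (S j) <= INR m) by (split; apply le_INR; lia).
  rewrite !S_INR in HmR. pose proof (pos_INR i). pose proof (pos_INR j).
  destruct (Nat.eq_dec i j) as [<-|Hij]; [left|right]; split; auto.
  - unfold circ_dist. rewrite Rminus_diag, Rabs_R0, Rmin_left; lra.
  - assert (S i <= j \/ S j <= i)%nat as [Hlt|Hlt] by lia;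
      apply le_INR in Hlt; rewrite S_INR in Hlt; [|rewrite circ_dist_sym];
      rewrite circ_dist_le by lra; apply Rmin_glb; lra.
Qed.

Lemma increments_bounds (P : nat -> R) A B m :
  (forall i, (i < m)%nat -> B <= P (S i) - P i <= A) ->
  forall a b, (a <= b <= m)%nat -> INR (b - a) * B <= P b - P a <= INR (b - a) * A.
Proof.
  intros Hstep a b. induction b as [|b IH]; intros Hb.
  - replace a with 0%nat by lia. simpl. lra.
  - destruct (Nat.eq_dec a (S b)) as [->|Ne].
    + rewrite Nat.sub_diag. simpl. lra.
    + specialize (IH ltac:(lia)). specialize (Hstep b ltac:(lia)).
      replace (S b - a)%nat with (S (b - a)) by lia. rewrite S_INR. lra.
Qed.

Lemma locate_increment (P : nat -> R) m y :
  P 0%nat = 0 -> 0 <= y -> y < P m -> exists i, (i < m)%nat /\ P i <= y < P (S i).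
Proof.
  intros H0 Hy. induction m as [|m IH]; intros Hm; [lra|].
  destruct (Rlt_dec y (P m)) as [Hl|Hl].
  - destruct (IH Hl) as [i [Hi Hi']]. exists i; split; [lia|auto].
  - exists m; split; [lia|]. lra.
Qed.

Lemma circ_dist_index_gap (P : nat -> R) A B m l a i j :
  0 <= B -> 0 < A -> (forall k, (k < m)%nat -> B <= P (S k) - P k <= A) ->
  P 0%nat = 0 -> P m = l -> (i < m)%nat -> (j < m)%nat ->
  P i <= a < P (S i) -> P j <= a + l / 2 < P (S j) ->
  l / (2 * A) - 1 <= circ_dist (INR m) (INR i) (INR j).
Proof.
  intros HB HA Hstep H0 Hm Hi Hj Ha Hb.
  pose proof (increments_bounds P A B m Hstep) as Hinc.
  assert (Hl : 0 <= l).
  { destruct (Hinc 0%nat m ltac:(lia)) as [Hlo _].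
    pose proof (pos_INR (m - 0)). nra. }
  assert (Hij : (i <= j)%nat).
  { apply Nat.nlt_ge. intros Hji. destruct (Hinc (S j) i ltac:(lia)) as [Hlo _].
    pose proof (pos_INR (i - S j)). nra. }
  destruct (Hinc i (S j) ltac:(lia)) as [_ Hu1].
  destruct (Hinc 0%nat (S i) ltac:(lia)) as [_ Hu2].
  destruct (Hinc j m ltac:(lia)) as [_ Hu3].
  rewrite Nat.sub_0_r in Hu2.
  rewrite !minus_INR, !S_INR in * by lia.
  assert (Hlim : l / (2 * A) * A = l / 2) by (field; lra).
  rewrite circ_dist_le by (apply le_INR in Hij; lra).
  apply Rmin_glb; apply (Rmult_le_reg_r A); nra.
Qed.

(* [K] is close enough to 1 that [lam / (K A) >= 2 / (1 + q)], and [m] is large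
   enough that the slack [l / (1 + q) - l / (2 q)] absorbs the [O(lam)] errors. *)
Lemma ngon_cycle_margin q K lam A l m :
  1 < q -> 1 < K -> K <= 2 -> 8 * (K - 1) <= q - 1 ->
  32 <= lam * (q - 1) -> 8 <= lam -> A = K * lam + 2 -> 0 <= m ->
  m * (lam / K - 2) <= l -> 48 * q * (q + 1) <= m * (q - 1) ->
  (1 / q) * (l / 2) <= (1 / K) * (lam * (l / (2 * A) - 1)) - 2 * (A + 1).
Proof.
  intros Hq HK HK2 HKq Hlq Hl8 HA Hm0 Hlm Hm.
  assert (HKK : K * K <= 1 + 3 * (K - 1)) by nra.
  assert (HKA : 2 * K * A <= lam * (1 + q)) by (subst A; nra).
  assert (HAp : 0 < A) by (subst A; nra).
  assert (Hlk : lam / 2 <= lam / K).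
  { apply Rmult_le_compat_l; [lra|]. apply Rinv_le_contravar; lra. }
  assert (Hl4 : m * lam / 4 <= l).
  { eapply Rle_trans; [|exact Hlm]. assert (lam / 4 <= lam / K - 2) by lra. nra. }
  assert (Hl0 : 0 <= l) by nra.
  assert (Hmain : l / (1 + q) <= (1 / K) * (lam * (l / (2 * A)))).
  { replace ((1 / K) * (lam * (l / (2 * A)))) with (lam * l / (2 * K * A)) by (field; lra).
    apply Rmult_le_reg_r with ((1 + q) * (2 * K * A)); [nra|].
    replace (l / (1 + q) * ((1 + q) * (2 * K * A))) with (l * (2 * K * A)) by (field; lra).
    replace (lam * l / (2 * K * A) * ((1 + q) * (2 * K * A))) with (l * (lam * (1 + q)))
      by (field; nra).
    apply Rmult_le_compat_l; lra. }
  assert (Hloss : (1 / K) * lam <= lam).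
  { assert (1 / K <= 1).
    { unfold Rdiv; rewrite Rmult_1_l, <- Rinv_1. apply Rinv_le_contravar; lra. }
    nra. }
  assert (Hslack_eq : l / (1 + q) - (1 / q) * (l / 2) = l * (q - 1) / (2 * q * (q + 1)))
    by (field; lra).
  assert (Hslack : 6 * lam <= l * (q - 1) / (2 * q * (q + 1))).
  { apply Rmult_le_reg_r with (2 * q * (q + 1)); [nra|].
    replace (l * (q - 1) / (2 * q * (q + 1)) * (2 * q * (q + 1))) with (l * (q - 1))
      by (field; lra).
    assert (m * lam / 4 * (q - 1) <= l * (q - 1)) by (apply Rmult_le_compat_r; lra).
    assert (48 * q * (q + 1) * lam <= m * (q - 1) * lam) by (apply Rmult_le_compat_r; lra).
    nra. }
  subst A. nra.
Qed.

Section Realization.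

Variable G : graph.
Hypothesis Hconn : connected_graph G.

Lemma walk_cat u v w n k : walk G u v n -> walk G v w k -> walk G u w (n + k).
Proof.
  intros Huv; revert w k; induction Huv; intros w k Hvw; simpl.
  - exact Hvw.
  - apply walk_fw, IHHuv, Hvw.
  - apply walk_bw, IHHuv, Hvw.
Qed.

Lemma walk_rev u v n : walk G u v n -> walk G v u n.
Proof.
  induction 1; [constructor|..]; rewrite <- Nat.add_1_r;
    (eapply walk_cat; [eassumption|]).
  - apply walk_bw; constructor.
  - apply walk_fw; constructor.
Qed.

Definition vdist_nat (u v : gV G) : nat := epsilon (inhabits 0%nat) (is_vdist G u v).

Lemma vdistE u v : vdist G u v = INR (vdist_nat u v).
Proof. reflexivity. Qed.

Lemma is_vdist_of_walk u v n : walk G u v n -> exists m, is_vdist G u v m.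
Proof.
  revert u v; induction n as [n IH] using (well_founded_induction Wf_nat.lt_wf).
  intros u v Hw.
  destruct (classic (exists m, walk G u v m /\ (m < n)%nat)) as [[m [Hm Hlt]]|Hmin].
  - exact (IH m Hlt u v Hm).
  - exists n; split; [exact Hw|]. intros m Hm.
    apply Nat.nlt_ge; intros Hlt; eauto.
Qed.

Lemma vdist_natP u v : is_vdist G u v (vdist_nat u v).
Proof.
  unfold vdist_nat; apply epsilon_spec. destruct (Hconn u v) as [n Hn].
  exact (is_vdist_of_walk u v n Hn).
Qed.

Lemma walk_vdist_nat u v : walk G u v (vdist_nat u v).
Proof. apply vdist_natP. Qed.

Lemma vdist_le_walk u v n : walk G u v n -> vdist G u v <= INR n.
Proof. intros Hw. apply le_INR, (proj2 (vdist_natP u v)), Hw. Qed.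

Lemma vdist_ge0 u v : 0 <= vdist G u v.
Proof. apply pos_INR. Qed.

Lemma vdist_refl u : vdist G u u = 0.
Proof.
  apply Rle_antisym; [|apply vdist_ge0].
  apply (vdist_le_walk u u 0%nat); constructor.
Qed.

Lemma vdist_triangle u v w : vdist G u w <= vdist G u v + vdist G v w.
Proof.
  rewrite !vdistE, <- plus_INR, <- vdistE. apply vdist_le_walk.
  eapply walk_cat; apply walk_vdist_nat.
Qed.

Lemma vdist_sym u v : vdist G u v = vdist G v u.
Proof.
  apply Rle_antisym; rewrite vdistE at 1;
    apply vdist_le_walk, walk_rev, walk_vdist_nat.
Qed.

Lemma vdist_src_tgt e : vdist G (gsrc G e) (gtgt G e) <= 1.
Proof. apply (vdist_le_walk _ _ 1%nat), walk_fw; constructor. Qed.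

Section PathMetric.

Implicit Types (x y z p : gpoint G) (e : gE G).

(* [exit_at x a o]: a route starting at [x] can leave its edge through the
   vertex [a] after running a length [o]; [via_ends x y] is the least
   [o + vdist a b + o'] over the exits of [x] and [y]. *)
Definition exit_at (x : gpoint G) (a : gV G) (o : R) : Prop :=
  match x with
  | Vtx v => a = v /\ o = 0
  | Ept e s => (a = gsrc G e /\ o = s) \/ (a = gtgt G e /\ o = 1 - s)
  end.

Lemma via_ends_le_exit x y a o b o' :
  exit_at x a o -> exit_at y b o' -> via_ends x y <= o + vdist G a b + o'.
Proof.
  destruct x as [u|e s], y as [v|e' t]; simpl; intros Hx Hy; unfold via_ends.
  - destruct Hx as [-> ->], Hy as [-> ->]; lra.
  - destruct Hx as [-> ->], Hy as [[-> ->]|[-> ->]].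
    + eapply Rle_trans; [apply Rmin_l|lra].
    + eapply Rle_trans; [apply Rmin_r|lra].
  - destruct Hy as [-> ->], Hx as [[-> ->]|[-> ->]].
    + eapply Rle_trans; [apply Rmin_l|lra].
    + eapply Rle_trans; [apply Rmin_r|lra].
  - destruct Hx as [[-> ->]|[-> ->]], Hy as [[-> ->]|[-> ->]].
    + eapply Rle_trans; [apply Rmin_l|]. eapply Rle_trans; [apply Rmin_l|lra].
    + eapply Rle_trans; [apply Rmin_l|]. eapply Rle_trans; [apply Rmin_r|lra].
    + eapply Rle_trans; [apply Rmin_r|]. eapply Rle_trans; [apply Rmin_l|lra].
    + eapply Rle_trans; [apply Rmin_r|]. eapply Rle_trans; [apply Rmin_r|lra].
Qed.

Lemma via_ends_attained x y : exists a o b o',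
  exit_at x a o /\ exit_at y b o' /\ via_ends x y = o + vdist G a b + o'.
Proof.
  destruct x as [u|e s], y as [v|e' t]; unfold via_ends; simpl.
  - exists u, 0, v, 0. repeat split; lra.
  - apply Rmin_case.
    + exists u, 0, (gsrc G e'), t. repeat split; auto; lra.
    + exists u, 0, (gtgt G e'), (1 - t). repeat split; auto; lra.
  - apply Rmin_case.
    + exists (gsrc G e), s, v, 0. repeat split; auto; lra.
    + exists (gtgt G e), (1 - s), v, 0. repeat split; auto; lra.
  - apply Rmin_case; apply Rmin_case.
    + exists (gsrc G e), s, (gsrc G e'), t. repeat split; auto.
    + exists (gsrc G e), s, (gtgt G e'), (1 - t). repeat split; auto.
    + exists (gtgt G e), (1 - s), (gsrc G e'), t. repeat split; auto.
    + exists (gtgt G e), (1 - s), (gtgt G e'), (1 - t). repeat split; auto.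
Qed.

Lemma exit_at_ge0 x a o : valid_point x -> exit_at x a o -> 0 <= o.
Proof. destruct x; simpl; intros Hx Ha; [lra|]. destruct Ha as [[_ ->]|[_ ->]]; lra. Qed.

Lemma vdist_exits_le y b o b' o' :
  valid_point y -> exit_at y b o -> exit_at y b' o' -> vdist G b b' <= o + o'.
Proof.
  destruct y as [v|e s]; simpl; intros Hy Hb Hb'.
  - destruct Hb as [-> ->], Hb' as [-> ->]. rewrite vdist_refl; lra.
  - pose proof (vdist_src_tgt e) as Hst.
    pose proof (vdist_src_tgt e) as Hts; rewrite vdist_sym in Hts.
    destruct Hb as [[-> ->]|[-> ->]], Hb' as [[-> ->]|[-> ->]];
      rewrite ?vdist_refl; lra.
Qed.

Lemma via_ends_triangle x y z :
  valid_point y -> via_ends x z <= via_ends x y + via_ends y z.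
Proof.
  intros Hy.
  destruct (via_ends_attained x y) as (a & o1 & b & o2 & Ha & Hb & ->).
  destruct (via_ends_attained y z) as (b' & o3 & c & o4 & Hb' & Hc & ->).
  eapply Rle_trans; [apply (via_ends_le_exit x z a o1 c o4 Ha Hc)|].
  pose proof (vdist_exits_le y b o2 b' o3 Hy Hb Hb').
  pose proof (vdist_triangle a b c). pose proof (vdist_triangle b b' c). lra.
Qed.

Lemma via_ends_ge0 x y : valid_point x -> valid_point y -> 0 <= via_ends x y.
Proof.
  intros Hx Hy. destruct (via_ends_attained x y) as (a & o & b & o' & Ha & Hb & ->).
  pose proof (exit_at_ge0 x a o Hx Ha). pose proof (exit_at_ge0 y b o' Hy Hb).
  pose proof (vdist_ge0 a b). lra.
Qed.

Lemma via_ends_sym x y : via_ends x y = via_ends y x.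
Proof.
  assert (Hle : forall x y, via_ends x y <= via_ends y x).
  { intros p p'. destruct (via_ends_attained p' p) as (a & o & b & o' & Ha & Hb & ->).
    rewrite vdist_sym. pose proof (via_ends_le_exit p p' b o' a o Hb Ha). lra. }
  apply Rle_antisym; apply Hle.
Qed.

Lemma via_ends_shift e s t z :
  via_ends (Ept e s) z <= Rabs (s - t) + via_ends (Ept e t) z.
Proof.
  destruct (via_ends_attained (Ept e t) z) as (a & o & b & o' & Ha & Hb & ->).
  destruct Ha as [[-> ->]|[-> ->]].
  - assert (Hexit : exit_at (Ept e s) (gsrc G e) s) by (left; split; reflexivity).
    pose proof (via_ends_le_exit _ _ _ _ _ _ Hexit Hb). pose proof (Rle_abs (s - t)). lra.
  - assert (Hexit : exit_at (Ept e s) (gtgt G e) (1 - s)) by (right; split; reflexivity).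
    pose proof (via_ends_le_exit _ _ _ _ _ _ Hexit Hb).
    pose proof (Rle_abs (t - s)) as Hts. rewrite Rabs_minus_sym in Hts. lra.
Qed.

Lemma gdist_le_via_ends x y : gdist x y <= via_ends x y.
Proof.
  destruct x as [u|e s], y as [v|e' t]; simpl; try lra.
  destruct (excluded_middle_informative (e = e')); [apply Rmin_r|lra].
Qed.

Lemma gdist_cases x y :
  gdist x y = via_ends x y \/
  exists e s t, x = Ept e s /\ y = Ept e t /\ gdist x y = Rabs (s - t).
Proof.
  destruct x as [u|e s], y as [v|e' t]; simpl; auto.
  destruct (excluded_middle_informative (e = e')) as [<-|]; auto.
  apply Rmin_case; auto. right; exists e, s, t; auto.
Qed.

Lemma gdist_same_edge_le e s t : gdist (Ept e s) (Ept e t) <= Rabs (s - t).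
Proof. simpl. destruct (excluded_middle_informative (e = e)); [apply Rmin_l|congruence]. Qed.

Lemma gdist_vtx u v : gdist (Vtx u) (Vtx v) = vdist G u v.
Proof. reflexivity. Qed.

Lemma gdist_ge0 x y : valid_point x -> valid_point y -> 0 <= gdist x y.
Proof.
  intros Hx Hy. destruct (gdist_cases x y) as [->|(e & s & t & _ & _ & ->)].
  - apply via_ends_ge0; assumption.
  - apply Rabs_pos.
Qed.

Lemma gdist_sym x y : gdist x y = gdist y x.
Proof.
  destruct x as [u|e s], y as [v|e' t]; cbn -[via_ends]; try apply via_ends_sym.
  destruct (excluded_middle_informative (e = e')) as [E|];
  destruct (excluded_middle_informative (e' = e)); try congruence.
  - subst. rewrite Rabs_minus_sym, via_ends_sym; reflexivity.
  - apply via_ends_sym.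
Qed.

Lemma gdist_triangle x y z : valid_point y -> gdist x z <= gdist x y + gdist y z.
Proof.
  intros Hy.
  destruct (gdist_cases y z) as [E2|(e' & t' & u & Ey & Ez & E2)];
  destruct (gdist_cases x y) as [E1|(e & s & t & Ex & Ey' & E1)]; rewrite E1, E2.
  - eapply Rle_trans; [apply gdist_le_via_ends|]. apply via_ends_triangle, Hy.
  - subst x y. eapply Rle_trans; [apply gdist_le_via_ends|]. apply via_ends_shift.
  - subst y z. eapply Rle_trans; [apply gdist_le_via_ends|].
    rewrite (via_ends_sym x), (via_ends_sym x (Ept e' t')), Rplus_comm, Rabs_minus_sym.
    apply via_ends_shift.
  - subst x y z. injection Ey' as -> ->.
    eapply Rle_trans; [apply gdist_same_edge_le|].
    replace (s - u) with ((s - t) + (t - u)) by ring. apply Rabs_triang.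
Qed.

Definition near_vertex (p : gpoint G) : gV G :=
  match p with Vtx v => v | Ept e _ => gsrc G e end.

Lemma gdist_near_vertex_le p : valid_point p -> gdist p (Vtx (near_vertex p)) <= 1.
Proof.
  destruct p as [v|e s]; cbn [near_vertex]; intros Hp.
  - rewrite gdist_vtx, vdist_refl; lra.
  - pose proof (via_ends_le_exit (Ept e s) (Vtx (gsrc G e)) (gsrc G e) s (gsrc G e) 0
      (or_introl (conj eq_refl eq_refl)) (conj eq_refl eq_refl)) as Hvia.
    pose proof (gdist_le_via_ends (Ept e s) (Vtx (gsrc G e))).
    rewrite vdist_refl in Hvia. simpl in Hp. lra.
Qed.

End PathMetric.

Definition dart_src (d : gE G * bool) : gV G :=
  if snd d then gsrc G (fst d) else gtgt G (fst d).
Definition dart_tgt (d : gE G * bool) : gV G :=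
  if snd d then gtgt G (fst d) else gsrc G (fst d).

Lemma is_comb_cycle_darts n f h :
  is_comb_cycle G n f h <->
  (0 < n)%nat /\ forall i, (i < n)%nat ->
    dart_src (h i) = f i /\ dart_tgt (h i) = f (Nat.modulo (i + 1) n).
Proof.
  unfold is_comb_cycle, dart_src, dart_tgt.
  split; intros [Hn Hh]; split; auto; intros i Hi; specialize (Hh i Hi);
    destruct (h i) as [e []]; simpl in *; tauto.
Qed.

Lemma vdist_dart d : vdist G (dart_src d) (dart_tgt d) <= 1.
Proof.
  destruct d as [e []]; unfold dart_src, dart_tgt; simpl;
    [|rewrite vdist_sym]; apply vdist_src_tgt.
Qed.

Section CyclePoints.

Variables (n : nat) (f : nat -> gV G) (h : nat -> gE G * bool).
Local Notation c := (cycle_pt G n h).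

Lemma cycle_ptE x :
  c x = match h (cyc_index n (Int_part x)) with
        | (e, true) => Ept e (x - IZR (Int_part x))
        | (e, false) => Ept e (1 - (x - IZR (Int_part x)))
        end.
Proof. reflexivity. Qed.

Lemma cycle_pt_valid x : valid_point (c x).
Proof.
  rewrite cycle_ptE. pose proof (frac_part_bounds x).
  destruct (h _) as [e []]; simpl; lra.
Qed.

Lemma cycle_pt_near_src x :
  gdist (c x) (Vtx (dart_src (h (cyc_index n (Int_part x))))) <= x - IZR (Int_part x).
Proof.
  rewrite cycle_ptE. unfold dart_src.
  destruct (h _) as [e []]; simpl fst; simpl snd;
    (eapply Rle_trans; [apply gdist_le_via_ends|]);
    (eapply Rle_trans; [eapply via_ends_le_exit; simpl; [|split; reflexivity]|]).
  - left; split; reflexivity.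
  - rewrite vdist_refl; lra.
  - right; split; reflexivity.
  - rewrite vdist_refl; lra.
Qed.

Lemma cycle_pt_near_tgt x :
  gdist (c x) (Vtx (dart_tgt (h (cyc_index n (Int_part x))))) <= 1 - (x - IZR (Int_part x)).
Proof.
  rewrite cycle_ptE. unfold dart_tgt.
  destruct (h _) as [e []]; simpl fst; simpl snd;
    (eapply Rle_trans; [apply gdist_le_via_ends|]);
    (eapply Rle_trans; [eapply via_ends_le_exit; simpl; [|split; reflexivity]|]).
  - right; split; reflexivity.
  - rewrite vdist_refl; lra.
  - left; split; reflexivity.
  - rewrite vdist_refl; lra.
Qed.

Lemma cycle_pt_same_edge x y : Int_part x = Int_part y -> gdist (c x) (c y) <= Rabs (x - y).
Proof.
  intros E. rewrite !cycle_ptE, <- E.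
  destruct (h _) as [e []]; (eapply Rle_trans; [apply gdist_same_edge_le|]); right.
  - f_equal; ring.
  - rewrite Rabs_minus_sym. f_equal; ring.
Qed.

Lemma cycle_pt_periodic x k : c (x + IZR k * INR n) = c x.
Proof.
  rewrite !cycle_ptE, INR_IZR_INZ, <- mult_IZR, Int_part_add_IZR, cyc_index_add_mul.
  rewrite plus_IZR.
  replace (x + IZR (k * Z.of_nat n) - (IZR (Int_part x) + IZR (k * Z.of_nat n)))
    with (x - IZR (Int_part x)) by ring.
  reflexivity.
Qed.

Hypothesis Hcycle : is_comb_cycle G n f h.

Definition cycle_vertex (z : Z) : gV G := f (cyc_index n z).

Lemma cycle_vertex_darts z :
  dart_src (h (cyc_index n z)) = cycle_vertex z /\
  dart_tgt (h (cyc_index n z)) = cycle_vertex (z + 1).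
Proof.
  apply is_comb_cycle_darts in Hcycle as [Hn Hh].
  destruct (Hh _ (cyc_index_lt n z Hn)) as [Es Et].
  unfold cycle_vertex. rewrite <- cyc_index_succ by exact Hn. auto.
Qed.

Lemma vdist_cycle_vertex_le (k : nat) z :
  vdist G (cycle_vertex z) (cycle_vertex (z + Z.of_nat k)) <= INR k.
Proof.
  revert z; induction k as [|k IH]; intros z.
  - rewrite Z.add_0_r, vdist_refl. simpl; lra.
  - eapply Rle_trans; [apply (vdist_triangle _ (cycle_vertex (z + Z.of_nat k)))|].
    rewrite S_INR. apply Rplus_le_compat; [apply IH|].
    destruct (cycle_vertex_darts (z + Z.of_nat k)) as [<- Et].
    replace (z + Z.of_nat (S k))%Z with (z + Z.of_nat k + 1)%Z by lia.
    rewrite <- Et. apply vdist_dart.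
Qed.

Lemma cycle_pt_IZR z : gdist (c (IZR z)) (Vtx (cycle_vertex z)) = 0.
Proof.
  apply Rle_antisym; [|apply gdist_ge0; [apply cycle_pt_valid|exact I]].
  pose proof (cycle_pt_near_src (IZR z)) as Hsrc.
  rewrite Int_part_IZR, (proj1 (cycle_vertex_darts z)) in Hsrc. lra.
Qed.

(* Between [x] and [y] the cycle runs to the end of the edge of [x],
   along whole edges, and into the edge of [y]. *)
Lemma cycle_pt_lipschitz x y : x <= y -> gdist (c x) (c y) <= y - x.
Proof.
  intros Hxy.
  pose proof (base_Int_part x) as Bx. pose proof (base_Int_part y) as By.
  set (a := Int_part x) in *. set (b := Int_part y) in *.
  assert (Hab : (a <= b)%Z).
  { apply Z.lt_succ_r, lt_IZR. rewrite succ_IZR. lra. }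
  destruct (Z.eq_dec a b) as [E|Ne].
  - eapply Rle_trans; [apply cycle_pt_same_edge, E|].
    rewrite Rabs_minus_sym, Rabs_right; lra.
  - pose proof (cycle_pt_near_tgt x) as Hx. fold a in Hx.
    rewrite (proj2 (cycle_vertex_darts a)) in Hx.
    pose proof (cycle_pt_near_src y) as Hy. fold b in Hy.
    rewrite (proj1 (cycle_vertex_darts b)), gdist_sym in Hy.
    pose proof (vdist_cycle_vertex_le (Z.to_nat (b - a - 1)) (a + 1)) as Hab'.
    rewrite Z2Nat.id in Hab' by lia.
    replace (a + 1 + (b - a - 1))%Z with b in Hab' by ring.
    rewrite INR_IZR_INZ, Z2Nat.id, !minus_IZR in Hab' by lia.
    eapply Rle_trans; [apply (gdist_triangle _ (Vtx (cycle_vertex (a + 1)))), I|].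
    eapply Rle_trans;
      [apply Rplus_le_compat_l, (gdist_triangle _ (Vtx (cycle_vertex b))), I|].
    rewrite gdist_vtx. lra.
Qed.

Lemma cycle_pt_dist_abs x y : gdist (c x) (c y) <= Rabs (x - y).
Proof.
  destruct (Rle_dec x y).
  - rewrite Rabs_minus_sym, Rabs_right by lra. apply cycle_pt_lipschitz; lra.
  - rewrite gdist_sym, Rabs_right by lra. apply cycle_pt_lipschitz; lra.
Qed.

Lemma cycle_pt_dist_le x y :
  Rabs (x - y) <= INR n -> gdist (c x) (c y) <= circ_dist (INR n) x y.
Proof.
  assert (W : forall x y, x <= y -> y - x <= INR n ->
            gdist (c x) (c y) <= circ_dist (INR n) x y).
  { intros x' y' Hxy Hl. rewrite circ_dist_le by lra. apply Rmin_glb.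
    - apply cycle_pt_lipschitz; lra.
    - rewrite <- (cycle_pt_periodic x' 1), gdist_sym.
      eapply Rle_trans; [apply cycle_pt_lipschitz; lra|]. lra. }
  intros Hl. destruct (Rle_dec x y).
  - rewrite Rabs_minus_sym, Rabs_right in Hl by lra. apply W; lra.
  - rewrite Rabs_right in Hl by lra. rewrite gdist_sym, circ_dist_sym. apply W; lra.
Qed.

(* A [1/K]-almost isometric cycle is a [(1 - 1/K) n/2]-rough isometry: compare
   with the antipode of [x]. *)
Lemma cycle_pt_dist_ge K x y : almost_isometric_cycle G K n h -> Rabs (x - y) <= INR n ->
  circ_dist (INR n) x y - (1 - 1 / K) * (INR n / 2) <= gdist (c x) (c y).
Proof.
  intros Hiso.
  assert (W : forall x y, x <= y -> y - x <= INR n ->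
    circ_dist (INR n) x y - (1 - 1 / K) * (INR n / 2) <= gdist (c x) (c y)).
  { intros x' y' Hxy Hl.
    pose proof (Rge_le _ _ (Hiso x')) as Hanti.
    pose proof (gdist_triangle (c x') (c y') (c (x' + INR n / 2)) (cycle_pt_valid y')).
    pose proof (cycle_pt_dist_abs y' (x' + INR n / 2)) as Hy.
    replace (y' - (x' + INR n / 2)) with ((y' - x') - INR n / 2) in Hy by ring.
    rewrite Rabs_sub_half_circ in Hy by lra. rewrite circ_dist_le by lra. lra. }
  intros Hl. destruct (Rle_dec x y).
  - rewrite Rabs_minus_sym, Rabs_right in Hl by lra. apply W; lra.
  - rewrite Rabs_right in Hl by lra. rewrite gdist_sym, circ_dist_sym. apply W; lra.
Qed.

Lemma almost_isometric_of_half q :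
  (forall a, 0 <= a -> a + INR n / 2 < INR n ->
     (1 / q) * (INR n / 2) <= gdist (c a) (c (a + INR n / 2))) ->
  almost_isometric_cycle G q n h.
Proof.
  intros Hhalf x. apply Rle_ge.
  assert (Hn : 0 < INR n) by (apply lt_0_INR, Hcycle).
  destruct (reduce_mod_period (INR n) x Hn) as [k Hk].
  set (x0 := x - IZR k * INR n) in Hk.
  replace x with (x0 + IZR k * INR n) by (unfold x0; ring).
  replace (x0 + IZR k * INR n + INR n / 2) with ((x0 + INR n / 2) + IZR k * INR n) by ring.
  rewrite !cycle_pt_periodic.
  destruct (Rlt_dec (x0 + INR n / 2) (INR n)) as [Hlt|Hge]; [apply Hhalf; lra|].
  set (a := x0 - INR n / 2).
  replace (x0 + INR n / 2) with (a + IZR 1 * INR n) by (unfold a; lra).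
  rewrite cycle_pt_periodic, gdist_sym.
  replace x0 with (a + INR n / 2) by (unfold a; ring).
  apply Hhalf; unfold a; lra.
Qed.

Lemma cycle_samples_bilip K K' m :
  almost_isometric_cycle G K' n h -> 1 < K -> (0 < m)%nat ->
  INR m * (1 - 1 / K') <= 1 - 1 / K ->
  bilip_ngon G K (INR n / INR m) m (fun i => c (INR i * (INR n / INR m))).
Proof.
  intros Hiso HK Hm Hdefect.
  assert (HmR : 0 < INR m) by (apply lt_0_INR, Hm).
  assert (HnR : 0 < INR n) by (apply lt_0_INR, Hcycle).
  set (lam := INR n / INR m).
  assert (Hn : INR n = lam * INR m) by (unfold lam; field; lra).
  assert (Hlam : 0 < lam) by (unfold lam; apply Rdiv_lt_0_compat; lra).
  assert (HinvK : 0 < 1 / K < 1).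
  { split; [apply Rdiv_lt_0_compat; lra|].
    unfold Rdiv; rewrite Rmult_1_l, <- Rinv_1; apply Rinv_lt_contravar; lra. }
  split; [intros; apply cycle_pt_valid|]. intros i j Hi Hj.
  assert (Hscale : circ_dist (INR n) (INR i * lam) (INR j * lam) = lam * cyc_dist m i j).
  { rewrite cyc_dist_circ, Hn, !(Rmult_comm _ lam). apply circ_dist_scale; lra. }
  assert (Hrange : Rabs (INR i * lam - INR j * lam) <= INR n).
  { rewrite <- Rmult_minus_distr_r, Rabs_mult, (Rabs_right lam), Hn, (Rmult_comm lam) by lra.
    apply Rmult_le_compat_r; [lra|].
    apply le_INR in Hi, Hj. rewrite S_INR in Hi, Hj. pose proof (pos_INR i).
    pose proof (pos_INR j). apply Rabs_le; lra. }
  pose proof (cycle_pt_dist_le _ _ Hrange) as Hup.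
  pose proof (cycle_pt_dist_ge K' _ _ Hiso Hrange) as Hlo.
  rewrite Hscale in Hup, Hlo. rewrite Hn in Hlo.
  destruct (cyc_dist_bounds m i j Hi Hj) as [[<- Hd]|[_ Hd]]; split.
  - rewrite Hd, !Rmult_0_r. apply gdist_ge0; apply cycle_pt_valid.
  - rewrite Hd, Rmult_0_r in *. lra.
  - assert (Hdef : (1 - 1 / K') * (lam * INR m / 2) <= (1 - 1 / K) * lam / 2) by nra.
    assert (0 <= (1 - 1 / K) * lam * (cyc_dist m i j - 1 / 2))
      by (apply Rmult_le_pos; [apply Rmult_le_pos|]; lra).
    nra.
  - assert (0 <= (K - 1) * (lam * cyc_dist m i j))
      by (apply Rmult_le_pos; [|apply Rmult_le_pos]; lra).
    nra.
Qed.

End CyclePoints.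

Fixpoint is_path (u : gV G) (p : list (gE G * bool)) (v : gV G) : Prop :=
  match p with
  | nil => u = v
  | d :: q => dart_src d = u /\ is_path (dart_tgt d) q v
  end.

Lemma is_path_of_walk u v n : walk G u v n -> exists p, is_path u p v /\ length p = n.
Proof.
  induction 1 as [v|e v n _ [p [Hp Hl]]|e v n _ [p [Hp Hl]]].
  - exists nil; simpl; auto.
  - exists ((e, true) :: p). simpl. auto.
  - exists ((e, false) :: p). simpl. auto.
Qed.

Lemma is_path_cat u p v q w : is_path u p v -> is_path v q w -> is_path u (p ++ q) w.
Proof.
  revert u; induction p as [|d p IH]; simpl; intros u Hp Hq.
  - subst; exact Hq.
  - destruct Hp; split; auto.
Qed.

Lemma is_path_consec u p v d0 : is_path u p v ->
  forall i, (S i < length p)%nat -> dart_tgt (nth i p d0) = dart_src (nth (S i) p d0).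
Proof.
  revert u; induction p as [|d p IH]; simpl; intros u Hp i Hi; [lia|].
  destruct Hp as [_ Hp], i as [|i].
  - destruct p as [|d' p]; simpl in *; [lia|]. symmetry; apply Hp.
  - apply (IH _ Hp). lia.
Qed.

Lemma is_path_head u p v d0 : is_path u p v -> p <> nil -> dart_src (nth 0 p d0) = u.
Proof. destruct p; simpl; intros; [congruence|tauto]. Qed.

Lemma is_path_last u p v d0 :
  is_path u p v -> p <> nil -> dart_tgt (nth (length p - 1) p d0) = v.
Proof.
  revert u; induction p as [|d p IH]; simpl; intros u Hp Hne; [congruence|].
  destruct Hp as [_ Hp], p as [|d' p]; [exact Hp|].
  replace (length (d' :: p) - 0)%nat with (S (length (d' :: p) - 1)) by (simpl; lia).
  apply (IH _ Hp). congruence.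
Qed.

Lemma comb_cycle_of_closed_path u p d0 : is_path u p u -> p <> nil ->
  is_comb_cycle G (length p) (fun k => dart_src (nth k p d0)) (fun k => nth k p d0).
Proof.
  intros Hp Hne. apply is_comb_cycle_darts.
  split; [destruct p; [congruence|simpl; lia]|]. intros i Hi. split; [reflexivity|].
  destruct (Nat.eq_dec (i + 1) (length p)) as [E|E].
  - rewrite E, Nat.Div0.mod_same, (is_path_head u p u d0 Hp Hne).
    replace i with (length p - 1)%nat by lia. apply (is_path_last u p u d0 Hp Hne).
  - rewrite Nat.mod_small, Nat.add_1_r by lia. apply (is_path_consec u p u d0 Hp). lia.
Qed.

Definition geodesic (u v : gV G) : list (gE G * bool) :=
  epsilon (inhabits nil) (fun p => is_path u p v /\ length p = vdist_nat u v).

Lemma geodesicP u v : is_path u (geodesic u v) v /\ length (geodesic u v) = vdist_nat u v.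
Proof. unfold geodesic. apply epsilon_spec, is_path_of_walk, walk_vdist_nat. Qed.

Definition chain_path (v : nat -> gV G) (a k : nat) : list (gE G * bool) :=
  flat_map (fun i => geodesic (v i) (v (S i))) (seq a k).

Lemma chain_path_is_path v k a : is_path (v a) (chain_path v a k) (v (a + k)%nat).
Proof.
  revert a; induction k as [|k IH]; intros a; simpl.
  - rewrite Nat.add_0_r; reflexivity.
  - eapply is_path_cat; [apply geodesicP|].
    rewrite Nat.add_succ_r, <- Nat.add_succ_l. apply IH.
Qed.

Lemma chain_path_length_S v i :
  length (chain_path v 0 (S i)) = (length (chain_path v 0 i) + vdist_nat (v i) (v (S i)))%nat.
Proof.
  unfold chain_path. rewrite seq_S, flat_map_app, length_app. simpl.
  rewrite app_nil_r. f_equal. apply geodesicP.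
Qed.

Lemma chain_path_split v m i :
  (i <= m)%nat -> chain_path v 0 m = chain_path v 0 i ++ chain_path v i (m - i).
Proof.
  intros Him. unfold chain_path. rewrite <- flat_map_app. f_equal.
  replace m with (i + (m - i))%nat at 1 by lia. apply seq_app.
Qed.

Lemma chain_cycle v m : v m = v 0%nat -> (0 < length (chain_path v 0 m))%nat ->
  exists f h, is_comb_cycle G (length (chain_path v 0 m)) f h /\
    forall i, (i <= m)%nat ->
      cycle_vertex (length (chain_path v 0 m)) f (Z.of_nat (length (chain_path v 0 i))) = v i.
Proof.
  intros Hvm Hlen.
  set (p := chain_path v 0 m) in *.
  assert (Hp : is_path (v 0%nat) p (v 0%nat)).
  { rewrite <- Hvm at 2. apply (chain_path_is_path v m 0). }
  assert (Hne : p <> nil) by (intros E; rewrite E in Hlen; simpl in Hlen; lia).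
  destruct p as [|d0 rest] eqn:Ep; [congruence|]. rewrite <- Ep in *.
  eexists _, _; split; [apply (comb_cycle_of_closed_path _ p d0 Hp Hne)|].
  intros i Hi. unfold cycle_vertex. rewrite cyc_index_of_nat by exact Hlen.
  pose proof (chain_path_split v m i Hi) as Hsplit. fold p in Hsplit.
  pose proof (chain_path_is_path v (m - i) i) as Hrest.
  replace (i + (m - i))%nat with m in Hrest by lia. rewrite Hvm in Hrest.
  assert (Hlp : length p = (length (chain_path v 0 i) + length (chain_path v i (m - i)))%nat)
    by (rewrite Hsplit; apply length_app).
  destruct (chain_path v i (m - i)) as [|d1 r1] eqn:Er.
  - simpl in Hrest, Hlp. rewrite Nat.add_0_r in Hlp. rewrite <- Hlp, Nat.Div0.mod_same, Hrest.
    apply (is_path_head _ p _ d0 Hp Hne).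
  - simpl in Hlp. rewrite Nat.mod_small by lia.
    rewrite Hsplit, app_nth2, Nat.sub_diag by lia.
    apply (is_path_head _ (d1 :: r1) _ d0 Hrest). congruence.
Qed.

Lemma long_almost_isometric_cycles : ~ strongly_shortcut_graph G ->
  forall K, 1 < K -> forall N, exists n f h,
    is_comb_cycle G n f h /\ almost_isometric_cycle G K n h /\ (N < n)%nat.
Proof.
  intros HnSS K HK N. apply NNPP; intros Hno. apply HnSS. exists K; split; [exact HK|].
  exists N. intros n f h Hcyc Hiso. apply Nat.nlt_ge. intros HNn.
  apply Hno; exists n, f, h; auto.
Qed.

Lemma approximates_of_not_strongly_shortcut :
  ~ strongly_shortcut_graph G -> approximates_ngons G.
Proof.
  intros HnSS K HK m L.
  destruct (Nat.eq_dec m 0) as [->|Hm].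
  { destruct (long_almost_isometric_cycles HnSS 2 ltac:(lra) 0) as (n & f & _).
    exists (Rabs L + 1). pose proof (Rle_abs L). pose proof (Rabs_pos L).
    split; [lra|split; [lra|]]. exists (fun _ => Vtx (f 0%nat)). split; intros; lia. }
  assert (HmR : 1 <= INR m) by (apply (le_INR 1); lia).
  assert (HinvK : 0 < 1 / K < 1).
  { split; [apply Rdiv_lt_0_compat; lra|].
    unfold Rdiv; rewrite Rmult_1_l, <- Rinv_1; apply Rinv_lt_contravar; lra. }
  set (eps := (1 - 1 / K) / INR m).
  assert (Heps : 0 < eps < 1).
  { unfold eps. split; [apply Rdiv_lt_0_compat; lra|].
    apply (Rmult_lt_reg_r (INR m)); [lra|].
    replace ((1 - 1 / K) / INR m * INR m) with (1 - 1 / K) by (field; lra). lra. }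
  set (K' := / (1 - eps)).
  assert (HK' : 1 < K') by (unfold K'; rewrite <- Rinv_1; apply Rinv_lt_contravar; lra).
  destruct (INR_archimed 1 (INR m * L) ltac:(lra)) as [N HN].
  destruct (long_almost_isometric_cycles HnSS K' HK' N) as (n & f & h & Hcyc & Hiso & HNn).
  apply lt_INR in HNn.
  exists (INR n / INR m). split; [|split].
  - apply Rdiv_lt_0_compat; pose proof (pos_INR N); lra.
  - apply (Rmult_lt_reg_r (INR m)); [lra|].
    replace (INR n / INR m * INR m) with (INR n) by (field; lra). lra.
  - eexists. apply (cycle_samples_bilip n f h Hcyc K K' m Hiso HK ltac:(lia)).
    replace (1 / K') with (1 - eps) by (unfold K'; field; lra).
    unfold eps. right; field; lra.
Qed.

Section NgonCycle.

Variables (q K lam : R) (m : nat) (g : nat -> gpoint G).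
Hypotheses (Hq : 1 < q) (HK : 1 < K) (HK2 : K <= 2) (HKq : 8 * (K - 1) <= q - 1)
  (Hm : 48 * q * (q + 1) <= INR m * (q - 1))
  (Hlam : 8 <= lam) (Hlamq : 32 <= lam * (q - 1))
  (Hbil : bilip_ngon G K lam m g).

Let v (i : nat) : gV G := near_vertex (g (Nat.modulo i m)).
Let A : R := K * lam + 2.
Let P (i : nat) : R := INR (length (chain_path v 0 i)).
Let l : nat := length (chain_path v 0 m).

Lemma ngon_size : (2 <= m)%nat.
Proof.
  apply Nat.nlt_ge. intros Hm1. assert (INR m <= 1) by (apply (le_INR _ 1); lia). nra.
Qed.

Lemma ngon_step_min : 2 <= lam / K - 2.
Proof.
  assert (lam / 2 <= lam / K) by (apply Rmult_le_compat_l; [|apply Rinv_le_contravar]; lra).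
  lra.
Qed.

Lemma gdist_ngon_near_vertex i : gdist (g (Nat.modulo i m)) (Vtx (v i)) <= 1.
Proof.
  apply gdist_near_vertex_le, (proj1 Hbil).
  apply Nat.mod_upper_bound. pose proof ngon_size. lia.
Qed.

Lemma vdist_ngon_step i : (i < m)%nat -> lam / K - 2 <= vdist G (v i) (v (S i)) <= A.
Proof.
  intros Hi. destruct Hbil as [Hval Hd].
  set (i' := Nat.modulo (S i) m).
  assert (Hi' : (i' < m)%nat) by (apply Nat.mod_upper_bound; lia).
  destruct (Hd i i' Hi Hi') as [Hlo Hhi].
  rewrite cyc_dist_succ in Hlo, Hhi by (pose proof ngon_size; lia).
  replace (1 / K * (lam * 1)) with (lam / K) in Hlo by (field; lra).
  pose proof (gdist_ngon_near_vertex i) as Ni. rewrite Nat.mod_small in Ni by exact Hi.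
  pose proof (gdist_ngon_near_vertex (S i)) as Ni'. fold i' in Ni'.
  rewrite <- gdist_vtx. split.
  - pose proof (gdist_triangle (g i) (Vtx (v i)) (g i') I).
    pose proof (gdist_triangle (Vtx (v i)) (Vtx (v (S i))) (g i') I).
    rewrite (gdist_sym (Vtx (v (S i))) (g i')) in *. lra.
  - pose proof (gdist_triangle (Vtx (v i)) (g i) (Vtx (v (S i))) (Hval i Hi)).
    pose proof (gdist_triangle (g i) (g i') (Vtx (v (S i))) (Hval i' Hi')).
    rewrite (gdist_sym (Vtx (v i)) (g i)) in *. unfold A. lra.
Qed.

Lemma chain_increment i : P (S i) - P i = vdist G (v i) (v (S i)).
Proof. unfold P. rewrite chain_path_length_S, plus_INR, vdistE. ring. Qed.

Lemma chain_increment_bounds i : (i < m)%nat -> lam / K - 2 <= P (S i) - P i <= A.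
Proof. rewrite chain_increment. apply vdist_ngon_step. Qed.

Lemma chain_long : INR m * (lam / K - 2) <= INR l.
Proof.
  destruct (increments_bounds P A (lam / K - 2) m chain_increment_bounds 0 m
    ltac:(lia)) as [Hlo _].
  rewrite Nat.sub_0_r in Hlo. unfold P in Hlo. simpl in Hlo. fold l in Hlo. lra.
Qed.

Section ChainCycle.

Variables (f : nat -> gV G) (h : nat -> gE G * bool).
Hypotheses (Hcycle : is_comb_cycle G l f h)
  (Hthrough : forall i, (i <= m)%nat ->
     cycle_vertex l f (Z.of_nat (length (chain_path v 0 i))) = v i).

Lemma chain_cycle_near_ngon i y : (i < m)%nat -> P i <= y <= P (S i) ->
  gdist (cycle_pt G l h y) (g i) <= A + 1.
Proof.
  intros Hi Hy.
  pose proof (cycle_pt_IZR l f h Hcycle (Z.of_nat (length (chain_path v 0 i)))) as Hvi.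
  rewrite Hthrough, <- INR_IZR_INZ in Hvi by lia. fold (P i) in Hvi.
  pose proof (cycle_pt_lipschitz l f h Hcycle (P i) y (proj1 Hy)) as Hlip.
  pose proof (gdist_ngon_near_vertex i) as Ni. rewrite Nat.mod_small in Ni by exact Hi.
  pose proof (chain_increment_bounds i Hi).
  pose proof (gdist_triangle (cycle_pt G l h y) (cycle_pt G l h (P i)) (g i)
    (cycle_pt_valid l h _)).
  pose proof (gdist_triangle (cycle_pt G l h (P i)) (Vtx (v i)) (g i) I).
  rewrite gdist_sym in Hlip, Ni. lra.
Qed.

(* Antipodal points of the cycle lie near n-gon vertices [g i], [g j] with
   [cyc_dist m i j] about [l / (2 A)], which the bilipschitz bound turns into
   a distance of about [l / (2 K^2)]. *)
Lemma chain_cycle_almost_isometric : almost_isometric_cycle G q l h.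
Proof.
  apply (almost_isometric_of_half l f h Hcycle). intros a Ha Hal.
  assert (HP0 : P 0%nat = 0) by reflexivity.
  assert (HPm : P m = INR l) by reflexivity.
  pose proof ngon_step_min.
  destruct (locate_increment P m a HP0 Ha ltac:(lra)) as (i & Hi & Hai).
  destruct (locate_increment P m (a + INR l / 2) HP0 ltac:(lra) ltac:(lra))
    as (j & Hj & Haj).
  assert (Hgap := circ_dist_index_gap P A (lam / K - 2) m (INR l) a i j ltac:(lra)
    ltac:(unfold A; nra) chain_increment_bounds HP0 HPm Hi Hj Hai Haj).
  rewrite <- cyc_dist_circ in Hgap.
  destruct (proj2 Hbil i j Hi Hj) as [Hgij _].
  assert (HKpos : 0 < 1 / K) by (apply Rdiv_lt_0_compat; lra).
  assert (1 / K * (lam * (INR l / (2 * A) - 1)) <= 1 / K * (lam * cyc_dist m i j))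
    by (apply Rmult_le_compat_l; [|apply Rmult_le_compat_l]; lra).
  pose proof (chain_cycle_near_ngon i a Hi ltac:(lra)) as Na.
  pose proof (chain_cycle_near_ngon j (a + INR l / 2) Hj ltac:(lra)) as Nb.
  rewrite gdist_sym in Na.
  pose proof (gdist_triangle (g i) (cycle_pt G l h a) (g j) (cycle_pt_valid l h _)).
  pose proof (gdist_triangle (cycle_pt G l h a) (cycle_pt G l h (a + INR l / 2)) (g j)
    (cycle_pt_valid l h _)).
  pose proof (ngon_cycle_margin q K lam A (INR l) (INR m) Hq HK HK2 HKq Hlamq Hlam
    eq_refl (pos_INR m) chain_long Hm).
  lra.
Qed.

End ChainCycle.

Lemma ngon_long_almost_isometric_cycle : exists n f h,
  is_comb_cycle G n f h /\ almost_isometric_cycle G q n h /\ INR m * (lam / K - 2) <= INR n.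
Proof.
  assert (Hvm : v m = v 0%nat).
  { unfold v. rewrite Nat.Div0.mod_same, Nat.Div0.mod_0_l. reflexivity. }
  assert (Hl : (0 < l)%nat).
  { apply INR_lt. pose proof chain_long. pose proof ngon_step_min.
    assert (2 <= INR m) by (apply (le_INR 2), ngon_size). simpl. nra. }
  destruct (chain_cycle v m Hvm Hl) as (f & h & Hcycle & Hthrough).
  exists l, f, h. split; [exact Hcycle|split; [|exact chain_long]].
  exact (chain_cycle_almost_isometric f h Hcycle Hthrough).
Qed.

End NgonCycle.

Lemma not_approximates_of_strongly_shortcut :
  strongly_shortcut_graph G -> ~ approximates_ngons G.
Proof.
  intros [q [Hq [N HN]]] Happ.
  set (K := 1 + Rmin 1 ((q - 1) / 8)).
  assert (HK : 1 < K /\ K <= 2 /\ 8 * (K - 1) <= q - 1).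
  { assert (0 < Rmin 1 ((q - 1) / 8)) by (apply Rmin_glb_lt; lra).
    pose proof (Rmin_l 1 ((q - 1) / 8)). pose proof (Rmin_r 1 ((q - 1) / 8)).
    unfold K; lra. }
  destruct HK as (HK1 & HK2 & HKq).
  destruct (INR_archimed (q - 1) (48 * q * (q + 1)) ltac:(lra)) as [m Hm].
  destruct (Happ K HK1 m (8 + 32 / (q - 1) + 4 * INR N)) as (lam & _ & HL & g & Hbil).
  assert (H32 : 32 / (q - 1) * (q - 1) = 32) by (field; lra).
  assert (0 <= 32 / (q - 1)) by (apply Rle_mult_inv_pos; lra).
  pose proof (pos_INR N).
  destruct (ngon_long_almost_isometric_cycle q K lam m g Hq HK1 HK2 HKq ltac:(lra)
    ltac:(lra) ltac:(nra) Hbil) as (l & f & h & Hcycle & Hiso & Hl).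
  apply (Nat.lt_nge N l); [|exact (HN l f h Hcycle Hiso)].
  apply INR_lt.
  assert (HmR : 1 <= INR m).
  { destruct m as [|m']; [simpl in Hm; nra|]. rewrite S_INR. pose proof (pos_INR m'). lra. }
  assert (lam / 2 <= lam / K) by (apply Rmult_le_compat_l; [|apply Rinv_le_contravar]; lra).
  nra.
Qed.

End Realization.

Theorem corollary3p6 (G : graph) (Hconn : connected_graph G) :
  strongly_shortcut_graph G <-> ~ approximates_ngons G.
Proof.
  split.
  - apply not_approximates_of_strongly_shortcut, Hconn.
  - intros Hnot. apply NNPP. intros HnSS.
    exact (Hnot (approximates_of_not_strongly_shortcut G Hconn HnSS)).
Qed.
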